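(* Let $f^*:\mathcal X\to\{-1,+1\}$ be a Bayes optimal classifier, i.e. a minimizer of $\mathbb P(f(X)\neq Y)$ over measurable $f:\mathcal X\to\{-1,+1\}$, and assume $\mathbb P(f^*(X)=-1\mid Y=+1)+\mathbb P(f^*(X)=+1\mid Y=-1)<1$. Define the $2\times 2$ matrix $\Delta$, indexed by $y,y'\in\{-1,+1\}$ (with $-1$ as the first index and $+1$ as the second), by $$\Delta_{y,y'}=\mathbb P\bigl(f^*(X)=y,\ \tilde Y=y'\bigr)-\mathbb P\bigl(f^*(X)=y\bigr)\,\mathbb P\bigl(\tilde Y=y'\bigr).$$ If $e_{-1}+e_{+1}<1$, then $\mathrm{Sgn}(\Delta)=I_{2\times 2}$, the identity matrix, where $\mathrm{Sgn}$ is applied entrywise.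
   Context: Let $\mathcal X\subseteq\mathbb R^d$ and let $(X,Y)$ be a random pair with distribution $\mathcal D$ on $\mathcal X\times\{-1,+1\}$, with $p:=\mathbb P(Y=+1)\in(0,1)$. A noisy label $\tilde Y\in\{-1,+1\}$ is observed instead of $Y$, with noise rates $e_{+1}:=\mathbb P(\tilde Y=-1\mid Y=+1)$ and $e_{-1}:=\mathbb P(\tilde Y=+1\mid Y=-1)$, and $\tilde Y$ is conditionally independent of $X$ given $Y$. For real $x$, $\mathrm{Sgn}(x)=1$ if $x>0$ and $\mathrm{Sgn}(x)=0$ otherwise. *)

From HB Require Import structures.
From mathcomp Require Import all_boot all_order all_algebra.
From mathcomp Require Import all_classical all_reals all_analysis.
Set Implicit Arguments. Unset Strict Implicit. Unset Printing Implicit Defensive.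
Import Order.TTheory GRing.Theory Num.Theory.
Local Open Scope classical_set_scope.
Local Open Scope ring_scope.

(* Labels {-1,+1} are encoded by bool: true <-> +1, false <-> -1. *)

Section Defs.
Context {d : measure_display} {T : measurableType d} {R : realType}.

Definition prb (P : probability T R) (A : set T) : R := fine (P A).

Definition cprb (P : probability T R) (A B : set T) : R :=
  prb P (A `&` B) / prb P B.
End Defs.

Definition Sgn {R : realType} (x : R) : R := if 0 < x then 1 else 0.

(* index of the 2x2 matrix: 0 <-> label -1 (false), 1 <-> label +1 (true) *)
Definition lab_of (i : 'I_2) : bool := (nat_of_ord i == 1)%N.

Definition Delta {d dX : measure_display} {T : measurableType d}
  {Xt : measurableType dX} {R : realType} (P : probability T R)
  (fstar : Xt -> bool) (X : T -> Xt) (Yt : T -> bool) : 'M[R]_2 :=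
  \matrix_(i < 2, j < 2)
    (prb P [set t | fstar (X t) = lab_of i /\ Yt t = lab_of j]
     - prb P [set t | fstar (X t) = lab_of i] * prb P [set t | Yt t = lab_of j]).

Definition bayes_optimal {d dX : measure_display} {T : measurableType d}
  {Xt : measurableType dX} {R : realType} (P : probability T R)
  (X : T -> Xt) (Y : T -> bool) (fstar : Xt -> bool) : Prop :=
  measurable_fun setT fstar /\
  forall f : Xt -> bool, measurable_fun setT f ->
    prb P [set t | fstar (X t) <> Y t] <= prb P [set t | f (X t) <> Y t].

Definition cond_indep_given {d dX : measure_display} {T : measurableType d}
  {Xt : measurableType dX} {R : realType} (P : probability T R)
  (Yt : T -> bool) (X : T -> Xt) (Y : T -> bool) : Prop :=
  forall (B : set Xt), measurable B -> forall y y' : bool,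
    cprb P ([set t | Yt t = y'] `&` (X @^-1` B)) [set t | Y t = y]
    = cprb P [set t | Yt t = y'] [set t | Y t = y]
      * cprb P (X @^-1` B) [set t | Y t = y].

From HB Require Import structures.
From mathcomp Require Import all_boot all_order all_algebra.
From mathcomp Require Import all_classical all_reals all_analysis.
From mathcomp Require Import ring lra.
Import Order.TTheory GRing.Theory Num.Theory.
Local Open Scope classical_set_scope.
Local Open Scope ring_scope.

(* Conditioning on the clean label Y splits every covariance of a [Yt]-event E
   and an X-event A into p (1 - p) (P(A|Y=+1) - P(A|Y=-1)) (P(E|Y=+1) - P(E|Y=-1)).
   Passing to the complementary event flips the sign of such a gap, and the
   hypotheses on f* and on the noise rates say exactly that the gaps of
   [f*(X) = +1] and [Yt = +1] are positive.  Hence Delta_{y,y'} is a positive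
   number times one factor -1 for each of y, y' equal to -1, and so is
   positive exactly when y = y'. *)

Section CondProb.
Set Implicit Arguments. Unset Strict Implicit.
Context {d : measure_display} {T : measurableType d} {R : realType}.
Variable P : probability T R.

Definition cprb_gap (A S : set T) : R := cprb P A S - cprb P A (~` S).

Lemma measurable_eq_bool (Z : T -> bool) (b : bool) :
  measurable_fun setT Z -> measurable [set t | Z t = b].
Proof. by move=> mZ; have := mZ measurableT [set b] I; rewrite setTI. Qed.

Lemma set_false_setC (Z : T -> bool) :
  [set t | Z t = false] = ~` [set t | Z t = true].
Proof. by apply/seteqP; split => t /=; case: (Z t). Qed.

Lemma prb_setC (S : set T) : measurable S -> prb P (~` S) = 1 - prb P S.
Proof. by move=> mS; rewrite /prb probability_setC // fineB ?fin_num_measure. Qed.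

Lemma prb_setID (A S : set T) : measurable A -> measurable S ->
  prb P A = prb P (A `&` S) + prb P (A `&` ~` S).
Proof.
move=> mA mS; have mAS := measurableI _ _ mA mS.
have mASC := measurableI _ _ mA (measurableC mS).
rewrite /prb -fineD ?fin_num_measure // -measureU //; last first.
  by rewrite setIACA setICr !setI0.
by rewrite -setIUr setUv setIT.
Qed.

Lemma cprbK (A S : set T) : prb P S != 0 ->
  prb P (A `&` S) = cprb P A S * prb P S.
Proof. by move=> S0; rewrite /cprb divfK. Qed.

Lemma cprbC (A S : set T) : measurable A -> measurable S -> prb P S != 0 ->
  cprb P (~` A) S = 1 - cprb P A S.
Proof.
move=> mA mS S0; rewrite /cprb setIC (setIC A).
by rewrite (prb_setID mS mA) in S0 *; field.
Qed.

Section Partition.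
Variable S : set T.
Hypotheses (mS : measurable S) (S_gt0 : 0 < prb P S) (SC_gt0 : 0 < prb P (~` S)).

Lemma prb_total (A : set T) : measurable A ->
  prb P A = cprb P A S * prb P S + cprb P A (~` S) * prb P (~` S).
Proof. by move=> mA; rewrite -!cprbK ?gt_eqF // -prb_setID. Qed.

Lemma cprb_gapC (A : set T) : measurable A -> cprb_gap (~` A) S = - cprb_gap A S.
Proof.
move=> mA; rewrite /cprb_gap !cprbC ?gt_eqF //; first ring.
exact: measurableC.
Qed.

Lemma cprb_gap_gt0 (A : set T) : measurable A ->
  cprb P (~` A) S + cprb P A (~` S) < 1 -> 0 < cprb_gap A S.
Proof. by move=> mA; rewrite cprbC ?gt_eqF // /cprb_gap; lra. Qed.

Lemma cprb_gap_eq_bool (Z : T -> bool) (b : bool) : measurable_fun setT Z ->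
  cprb_gap [set t | Z t = b] S = (-1) ^+ (~~ b) * cprb_gap [set t | Z t = true] S.
Proof.
move=> mZ; case: b; first by rewrite mul1r.
by rewrite set_false_setC cprb_gapC ?mulN1r //; exact: measurable_eq_bool.
Qed.

Lemma cov_cond_indep (A E : set T) : measurable A -> measurable E ->
  cprb P (A `&` E) S = cprb P A S * cprb P E S ->
  cprb P (A `&` E) (~` S) = cprb P A (~` S) * cprb P E (~` S) ->
  prb P (A `&` E) - prb P A * prb P E =
    prb P S * prb P (~` S) * (cprb_gap A S * cprb_gap E S).
Proof.
move=> mA mE indS indSC.
rewrite (prb_total (measurableI _ _ mA mE)) (prb_total mA) (prb_total mE).
by rewrite indS indSC /cprb_gap (prb_setC mS); ring.
Qed.

End Partition.
End CondProb.

Lemma Sgn_sign_mul {R : realType} (b b' : bool) (k x y : R) :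
  0 < k -> 0 < x * y ->
  Sgn (k * ((-1) ^+ (~~ b) * x * ((-1) ^+ (~~ b') * y))) = (b == b')%:R.
Proof.
move=> k_gt0 xy_gt0; have kxy_gt0 := mulr_gt0 k_gt0 xy_gt0.
rewrite /Sgn; case: b; case: b' => /=;
  rewrite ?expr1 ?expr0 ?mul1r ?mulN1r ?mulrNN ?mulNr ?mulrN -?mulrA;
  by rewrite ?kxy_gt0 // oppr_gt0 ltNge (ltW kxy_gt0).
Qed.

Lemma lab_of_eq (i j : 'I_2) : (lab_of i == lab_of j) = (i == j).
Proof. by case: i => [[|[|?]] ?]; case: j => [[|[|?]] ?]. Qed.

Theorem lemma1 (d dX : measure_display) (T : measurableType d)
  (Xt : measurableType dX) (R : realType) (P : probability T R)
  (X : T -> Xt) (Y Yt : T -> bool)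
  (mX : measurable_fun setT X) (mY : measurable_fun setT Y)
  (mYt : measurable_fun setT Yt)
  (hp : 0 < prb P [set t | Y t = true] < 1)
  (hind : cond_indep_given P Yt X Y)
  (fstar : Xt -> bool)
  (hbayes : bayes_optimal P X Y fstar)
  (hf : cprb P [set t | fstar (X t) = false] [set t | Y t = true]
        + cprb P [set t | fstar (X t) = true] [set t | Y t = false] < 1)
  (hnoise : cprb P [set t | Yt t = false] [set t | Y t = true]
            + cprb P [set t | Yt t = true] [set t | Y t = false] < 1) :
  map_mx Sgn (Delta P fstar X Yt) = 1%:M.
Proof.
have [mfstar _] := hbayes.
have mfX : measurable_fun setT (fstar \o X) := measurableT_comp mfstar mX.
set S := [set t | Y t = true] in hp hf hnoise.
have mS : measurable S := measurable_eq_bool true mY.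
have [S_gt0 S_lt1] := andP hp.
have SC_gt0 : 0 < prb P (~` S) by rewrite prb_setC //; lra.
rewrite (set_false_setC Y) -/S in hf hnoise.
have mF y : measurable [set t | fstar (X t) = y] := measurable_eq_bool y mfX.
have mE y : measurable [set t | Yt t = y] := measurable_eq_bool y mYt.
have indep b y y' : cprb P ([set t | fstar (X t) = y] `&` [set t | Yt t = y'])
      [set t | Y t = b] = cprb P [set t | fstar (X t) = y] [set t | Y t = b]
                          * cprb P [set t | Yt t = y'] [set t | Y t = b].
  by rewrite setIC mulrC; exact: (hind _ (measurable_eq_bool y mfstar)).
have gapf_gt0 : 0 < cprb_gap P [set t | fstar (X t) = true] S.
  by apply: cprb_gap_gt0; rewrite // -(set_false_setC (fstar \o X)).
have gapYt_gt0 : 0 < cprb_gap P [set t | Yt t = true] S.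
  by apply: cprb_gap_gt0; rewrite // -set_false_setC.
apply/matrixP => i j; rewrite !mxE.
rewrite (cov_cond_indep mS S_gt0 SC_gt0 (mF _) (mE _)) ?indep //;
  last by rewrite -(set_false_setC Y) indep.
rewrite (cprb_gap_eq_bool mS S_gt0 SC_gt0 (lab_of i) mfX).
rewrite (cprb_gap_eq_bool mS S_gt0 SC_gt0 (lab_of j) mYt).
by rewrite Sgn_sign_mul ?mulr_gt0 // lab_of_eq.
Qed.
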